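(* Let $V=\mathbf R^{p,q}$ be a pseudo-Euclidean vector space with inner product $\langle\cdot,\cdot\rangle$, and let $T$ be a $(3,1)$-tensor on $V$ (a trilinear map $V^3\to V$) having the same symmetries as a $(3,1)$-curvature tensor. Let $V_1,V_2\subset V$ be subspaces such that $V_1\cap V_2$ is non-degenerate and $V=V_1+V_2$. If $T(V_i,V_i,V_i)=0$ for $i=1,2$ and the image of $T$ is contained in $V_1\cap V_2$, then $T=0$.
   Context: ''The same symmetries as a $(3,1)$-curvature tensor'' means: $T(u,v)w=-T(v,u)w$, the first Bianchi identity $T(u,v)w+T(v,w)u+T(w,u)v=0$, and $\langle T(u,v)w,z\rangle=-\langle T(u,v)z,w\rangle$ (hence also pair symmetry $\langle T(u,v)w,z\rangle=\langle T(w,z)u,v\rangle$), writing $T(u,v,w)=T(u,v)w$. *)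

(* V = R^{p,q} modelled as row vectors 'rV[R]_(p+q). *)
From HB Require Import structures.
From mathcomp Require Import all_boot all_order all_algebra.
Set Implicit Arguments. Unset Strict Implicit. Unset Printing Implicit Defensive.
Import Order.TTheory GRing.Theory Num.Theory.
Local Open Scope ring_scope.

Definition pform (R : realFieldType) (p q : nat) (x y : 'rV[R]_(p + q)) : R :=
  \sum_(i < p + q) (if (i < p)%N then x 0 i * y 0 i else - (x 0 i * y 0 i)).

Definition trilinear (R : realFieldType) (n : nat)
    (T : 'rV[R]_n -> 'rV[R]_n -> 'rV[R]_n -> 'rV[R]_n) : Prop :=
  (forall (a : R) u u' v w, T (a *: u + u') v w = a *: T u v w + T u' v w) /\
  (forall (a : R) u v v' w, T u (a *: v + v') w = a *: T u v w + T u v' w) /\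
  (forall (a : R) u v w w', T u v (a *: w + w') = a *: T u v w + T u v w').

Definition curvature_like (R : realFieldType) (p q : nat)
    (T : 'rV[R]_(p + q) -> 'rV[R]_(p + q) -> 'rV[R]_(p + q) -> 'rV[R]_(p + q)) : Prop :=
  (forall u v w, T u v w = - T v u w) /\
  (forall u v w, T u v w + T v w u + T w u v = 0) /\
  (forall u v w z, pform (T u v w) z = - pform (T u v z) w).

(* A subspace U (row space of a matrix) is non-degenerate for pform. *)
Definition pnondegenerate (R : realFieldType) (p q m : nat) (U : 'M[R]_(m, p + q)) : Prop :=
  forall x : 'rV[R]_(p + q), (x <= U)%MS ->
    (forall y : 'rV[R]_(p + q), (y <= U)%MS -> pform x y = 0) -> x = 0.

(* Pair T u v w with any y in the non-degenerate space V1 ∩ V2.  Splitting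
   u, v, w along V = V1 + V2 expands <T u v w, y> into eight terms; in each,
   two of the three arguments of T lie in the same V_i, and so does y.  The
   symmetries of a curvature tensor (including pair symmetry) move three
   arguments lying in V_i into the slots of T, where T vanishes on V_i^3.
   Hence <T u v w, y> = 0 for all such y, and T u v w = 0 by non-degeneracy. *)
From HB Require Import structures.
From mathcomp Require Import all_boot all_order all_algebra.
From mathcomp Require Import lra.
Import Order.TTheory GRing.Theory Num.Theory.
Local Open Scope ring_scope.

Lemma sub_addsmx_split (F : fieldType) m1 m2 n (A : 'M[F]_(m1, n))
    (B : 'M[F]_(m2, n)) (x : 'rV[F]_n) :
  (x <= A + B)%MS -> exists x1 x2, [/\ (x1 <= A)%MS, (x2 <= B)%MS & x = x1 + x2].
Proof.
by case/sub_addsmxP=> -[a b] ->; exists (a *m A), (b *m B); rewrite !submxMl.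
Qed.

Section PseudoEuclidean.
Context {R : realFieldType} {p q : nat}.
Local Notation V := 'rV[R]_(p + q).

Lemma pformDl (x y z : V) : pform (x + y) z = pform x z + pform y z.
Proof.
rewrite /pform -big_split; apply: eq_bigr => i _; rewrite !mxE.
by case: ifP => _; rewrite mulrDl // opprD.
Qed.

Lemma pformNl (x z : V) : pform (- x) z = - pform x z.
Proof.
rewrite /pform -sumrN; apply: eq_bigr => i _.
by rewrite !mxE mulNr; case: ifP.
Qed.

Lemma pform0l (z : V) : pform 0 z = 0.
Proof. by rewrite /pform big1 // => i _; rewrite !mxE mul0r; case: ifP; rewrite ?oppr0. Qed.

Section Trilinear.
Context {T : V -> V -> V -> V}.
Hypothesis T_trilinear : trilinear T.

Lemma trilinearDl a a' b c : T (a + a') b c = T a b c + T a' b c.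
Proof. by have := T_trilinear.1 1 a a' b c; rewrite !scale1r. Qed.

Lemma trilinearDm a b b' c : T a (b + b') c = T a b c + T a b' c.
Proof. by have := T_trilinear.2.1 1 a b b' c; rewrite !scale1r. Qed.

Lemma trilinearDr a b c c' : T a b (c + c') = T a b c + T a b c'.
Proof. by have := T_trilinear.2.2 1 a b c c'; rewrite !scale1r. Qed.

End Trilinear.

Section CurvatureLike.
Context {T : V -> V -> V -> V}.
Hypothesis T_curv : curvature_like T.

Local Notation curv a b c d := (pform (T a b c) d).

Lemma curv_antisym12 a b c d : curv a b c d = - curv b a c d.
Proof. by rewrite T_curv.1 pformNl. Qed.

Lemma curv_antisym34 a b c d : curv a b c d = - curv a b d c.
Proof. exact: T_curv.2.2. Qed.

Lemma curv_bianchi a b c d : curv a b c d + curv b c a d + curv c a b d = 0.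
Proof. by rewrite -!pformDl T_curv.2.1 pform0l. Qed.

(* The classical argument: add the first Bianchi identity for the four cyclic
   shifts of (x, y, z, w) and use both antisymmetries. *)
Lemma curv_pairsym x y z w : curv x y z w = curv z w x y.
Proof.
have := curv_bianchi x y z w; have := curv_bianchi y z w x.
have := curv_bianchi z w x y; have := curv_bianchi w x y z.
have := curv_antisym34 x y w z; have := curv_antisym34 w x y z.
have := curv_antisym34 z w x y; have := curv_antisym34 y z w x.
have := curv_antisym12 x z y w; have := curv_antisym34 x z y w.
have := curv_antisym12 y w z x; have := curv_antisym34 y w z x.
move=> *; lra.
Qed.

Lemma curv_eq0_sub {U : 'M[R]_(p + q)} :
  (forall u v w, (u <= U)%MS -> (v <= U)%MS -> (w <= U)%MS -> T u v w = 0) ->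
  forall a b c d, (d <= U)%MS ->
  [|| (a <= U)%MS && (b <= U)%MS, (a <= U)%MS && (c <= U)%MS
    | (b <= U)%MS && (c <= U)%MS] ->
  curv a b c d = 0.
Proof.
move=> TU a b c d dU /or3P[/andP[aU bU] | /andP[aU cU] | /andP[bU cU]].
- by rewrite curv_antisym34 TU // pform0l oppr0.
- by rewrite curv_pairsym TU // pform0l.
- by rewrite curv_antisym12 curv_pairsym TU // pform0l oppr0.
Qed.

Lemma curv_eq0_cap {V1 V2 : 'M[R]_(p + q)} :
  (forall u v w, (u <= V1)%MS -> (v <= V1)%MS -> (w <= V1)%MS -> T u v w = 0) ->
  (forall u v w, (u <= V2)%MS -> (v <= V2)%MS -> (w <= V2)%MS -> T u v w = 0) ->
  forall a b c d,
  (a <= V1)%MS || (a <= V2)%MS -> (b <= V1)%MS || (b <= V2)%MS ->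
  (c <= V1)%MS || (c <= V2)%MS -> (d <= V1 :&: V2)%MS ->
  curv a b c d = 0.
Proof.
move=> TV1 TV2 a b c d aV bV cV; rewrite sub_capmx => /andP[dV1 dV2].
case/orP: aV => aV; case/orP: bV => bV; case/orP: cV => cV;
  by [apply: (curv_eq0_sub TV1) => //; rewrite ?aV ?bV ?cV ?orbT
     | apply: (curv_eq0_sub TV2) => //; rewrite ?aV ?bV ?cV ?orbT].
Qed.

End CurvatureLike.

End PseudoEuclidean.

Theorem lemma4p4 (R : realFieldType) (p q : nat)
    (T : 'rV[R]_(p + q) -> 'rV[R]_(p + q) -> 'rV[R]_(p + q) -> 'rV[R]_(p + q))
    (V1 V2 : 'M[R]_(p + q)) :
  trilinear T ->
  curvature_like T ->
  pnondegenerate (V1 :&: V2)%MS ->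
  (V1 + V2 == 1%:M)%MS ->
  (forall u v w, (u <= V1)%MS -> (v <= V1)%MS -> (w <= V1)%MS -> T u v w = 0) ->
  (forall u v w, (u <= V2)%MS -> (v <= V2)%MS -> (w <= V2)%MS -> T u v w = 0) ->
  (forall u v w, (T u v w <= V1 :&: V2)%MS) ->
  forall u v w, T u v w = 0.
Proof.
move=> Ttri Tcurv Hnd /eqmxP Vsum TV1 TV2 Tim u v w.
have split12 (x : 'rV[R]_(p + q)) :
    exists x1 x2, [/\ (x1 <= V1)%MS, (x2 <= V2)%MS & x = x1 + x2].
  by apply: sub_addsmx_split; rewrite Vsum submx1.
apply: Hnd; first exact: Tim.
move=> y yV12.
have [u1 [u2 [u1V u2V ->]]] := split12 u.
have [v1 [v2 [v1V v2V ->]]] := split12 v.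
have [w1 [w2 [w1V w2V ->]]] := split12 w.
rewrite !(trilinearDl Ttri) !(trilinearDm Ttri) !(trilinearDr Ttri) !pformDl.
by rewrite !(curv_eq0_cap Tcurv TV1 TV2) ?addr0 ?u1V ?u2V ?v1V ?v2V ?w1V ?w2V ?orbT.
Qed.
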